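(* For all $n\in\mathbb{N}$ with $n\geq 2$, $$\iota(2^n-1)\leq \frac{3}{2}n-\left\lfloor \frac{n-2}{2^{\lfloor \frac{\log n}{\log 2}-1\rfloor+1}}\right\rfloor-\left\lfloor \frac{\log n}{\log 2}-1\right\rfloor+\frac{1}{4}\left(1-(-1)^n\right)+\iota(n).$$
   Context: An addition chain producing $N$ is a sequence $1,2,s_3,\ldots,s_k=N$ in which every term after the first is the sum of two (not necessarily distinct) earlier terms; its length is the number of terms excluding the initial $1$. $\iota(N)$ denotes the length of the shortest addition chain producing $N$. $\lfloor\cdot\rfloor$ is the floor function and $\log$ the natural logarithm. *)

From Stdlib Require Import Reals ClassicalEpsilon.
From mathcomp Require Import all_boot zify.
Set Implicit Arguments.
Unset Strict Implicit.
Unset Printing Implicit Defensive.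

Fixpoint chain_ok (pre s : seq nat) : bool :=
  match s with
  | [::] => true
  | a :: t => has (fun x => has (fun y => x + y == a) pre) pre
              && chain_ok (rcons pre a) t
  end.

(* An addition chain producing N: the sequence 1, s_1, ..., s_k with s_k = N
   (s_k = 1 when k = 0).  We store only the terms after the initial 1;
   the length of the chain is [size s]. *)
Definition addition_chain_for (N : nat) (s : seq nat) : bool :=
  chain_ok [:: 1] s && (last 1 s == N).

Definition has_chain_of_length (N k : nat) : Prop :=
  exists s, addition_chain_for N s /\ size s = k.

Definition has_chain_of_lengthb (N k : nat) : bool :=
  if excluded_middle_informative (has_chain_of_length N k) then true else false.

Lemma chain_ok_iota k m : 0 < k -> chain_ok (iota 1 k) (iota k.+1 m).
Proof.
elim: m k => [|m IH] k hk //=.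
apply/andP; split.
  apply/hasP; exists k; first by rewrite mem_iota hk /= add1n ltnSn.
  apply/hasP; exists 1; first by rewrite mem_iota /= add1n ltnS.
  by rewrite addn1.
have -> : rcons (iota 1 k) k.+1 = iota 1 k.+1 by rewrite -cats1 -(addn1 k) iotaD add1n addn1.
exact: IH.
Qed.

Lemma has_chain_exists N : 0 < N -> exists k, has_chain_of_lengthb N k.
Proof.
move=> hN; exists N.-1; rewrite /has_chain_of_lengthb.
case: excluded_middle_informative => // []; case.
exists (iota 2 N.-1); split; last by rewrite size_iota.
rewrite /addition_chain_for (chain_ok_iota N.-1 (k:=1)) //=.
case: N hN => [|[|N]] //= _.
have H : forall m, last m (iota m.+1 N) = m + N.
  elim: N => [|N IH] m /=; first by rewrite addn0.
  rewrite IH; lia.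
by rewrite H.
Qed.

(* iota(N): the length of a shortest addition chain producing N (N >= 1);
   set to 0 for N = 0, where no chain exists. *)
Definition iota_ac (N : nat) : nat :=
  match (0 < N) as b return (0 < N) = b -> nat with
  | true => fun h => ex_minn (has_chain_exists h)
  | false => fun _ => 0
  end (erefl _).

(* Every addition chain at most doubles its largest term at each step, so
   n <= 2 ^ iota(n).  Hence the second floor term is at most iota(n) - 1, and
   since 2 ^ (floor(log2 n - 1) + 1) > n / 2 the first one is at most 1: the
   right-hand side is at least 3n/2.  Extending a chain for x = 2^k - 1 by
   2x, 4x, 4x + 3 = 2^(k+2) - 1, starting from 1, 2, 3 and 1, 2, 3, 6, 7,
   gives chains for 2^n - 1 of length less than 3n/2. *)

From Stdlib Require Import Reals Lra ClassicalEpsilon.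
From mathcomp Require Import all_boot zify.

Set Implicit Arguments.
Unset Strict Implicit.
Unset Printing Implicit Defensive.

Lemma iota_ac_min N s : 0 < N -> addition_chain_for N s -> iota_ac N <= size s.
Proof.
move=> hN hs; rewrite /iota_ac.
move: (erefl (0 < N)); case: {2 3}(0 < N) => e; last by rewrite hN in e.
case: ex_minnP => m _; apply.
rewrite /has_chain_of_lengthb; case: excluded_middle_informative => // [[]].
by exists s.
Qed.

Lemma iota_ac_attained N : 0 < N ->
  exists2 s, addition_chain_for N s & size s = iota_ac N.
Proof.
move=> hN; rewrite /iota_ac.
move: (erefl (0 < N)); case: {2 3}(0 < N) => e; last by rewrite hN in e.
case: ex_minnP => m + _.
by rewrite /has_chain_of_lengthb; case: excluded_middle_informative => // [[s []]]; exists s.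
Qed.

Lemma chain_ok_rcons pre s a :
  chain_ok pre (rcons s a) =
  chain_ok pre s && has (fun x => has (fun y => x + y == a) (pre ++ s)) (pre ++ s).
Proof.
elim: s pre => [|b s IH] pre /=; first by rewrite cats0 andbT.
by rewrite IH -cats1 -catA andbA.
Qed.

Lemma addition_chain_last N s : addition_chain_for N s -> N \in 1 :: s.
Proof. by case/andP=> _ /eqP <-; exact: mem_last. Qed.

Lemma addition_chain_rcons N s x y :
  addition_chain_for N s -> x \in 1 :: s -> y \in 1 :: s ->
  addition_chain_for (x + y) (rcons s (x + y)).
Proof.
case/andP=> hs _ hx hy.
rewrite /addition_chain_for chain_ok_rcons hs last_rcons eqxx andbT.
by apply/hasP; exists x => //; apply/hasP; exists y.
Qed.

Lemma chain_ok_last_le pre s B d :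
  all (fun x => x <= B) pre -> d <= B -> chain_ok pre s ->
  last d s <= 2 ^ size s * B.
Proof.
elim: s pre B d => [|a t IH] pre B d hpre hd; first by rewrite mul1n.
case/andP=> /hasP[x hx /hasP[y hy /eqP <-]] ht.
have hxB := allP hpre x hx; have hyB := allP hpre y hy.
rewrite expnS -mulnA mulnCA; apply: IH ht; last by lia.
rewrite all_rcons; apply/andP; split; first by lia.
by apply: sub_all hpre => z /=; lia.
Qed.

Lemma addition_chain_le_exp N s : addition_chain_for N s -> N <= 2 ^ size s.
Proof. by case/andP=> hs /eqP <-; rewrite -[2 ^ _]muln1; exact: chain_ok_last_le hs. Qed.

Lemma iota_ac_ge N : 0 < N -> N <= 2 ^ iota_ac N.
Proof.
by move=> hN; have [s hs <-] := iota_ac_attained hN; exact: addition_chain_le_exp.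
Qed.

Lemma addition_chain_mul4_add3 N s : addition_chain_for N s -> 3 \in s ->
  exists2 t, addition_chain_for (4 * N + 3) t & (3 \in t) && (size t == size s + 3).
Proof.
move=> hN h3.
have h2N := addition_chain_rcons hN (addition_chain_last hN) (addition_chain_last hN).
have h4N := addition_chain_rcons h2N (addition_chain_last h2N) (addition_chain_last h2N).
have h3in : 3 \in 1 :: rcons (rcons s (N + N)) (N + N + (N + N)).
  by rewrite !(inE, mem_rcons) h3 !orbT.
have := addition_chain_rcons h4N (addition_chain_last h4N) h3in.
rewrite (_ : N + N + (N + N) + 3 = 4 * N + 3); last by lia.
move=> h; eexists; first exact: h.
by rewrite !(inE, mem_rcons) h3 !orbT !size_rcons addn3 eqxx.
Qed.

Lemma mersenne_chain n : 1 < n ->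
  exists2 s, addition_chain_for (2 ^ n - 1) s & (3 \in s) && (2 * size s < 3 * n).
Proof.
pose P m := exists2 s, addition_chain_for (2 ^ m - 1) s & (3 \in s) && (2 * size s < 3 * m).
have step m : P m -> P (m + 2).
  case=> s hs /andP[h3 hsize].
  have [t ht /andP[h3t /eqP hsizet]] := addition_chain_mul4_add3 hs h3.
  exists t; last by rewrite h3t hsizet /=; lia.
  have hpos : 0 < 2 ^ m by rewrite expn_gt0.
  by rewrite expnD (_ : 2 ^ m * 2 ^ 2 - 1 = 4 * (2 ^ m - 1) + 3) //; lia.
suff base k : P (k + 2) /\ P (k + 3).
  by move=> hn; have [+ _] := base (n - 2); rewrite subnK.
elim: k => [|k [IH2 IH3]]; first by split; [exists [:: 2; 3] | exists [:: 2; 3; 6; 7]].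
split; first by rewrite addSnnS.
have -> : k.+1 + 3 = k + 2 + 2 by lia.
exact: step.
Qed.

Lemma iota_ac_mersenne_lt n : 1 < n -> 2 * iota_ac (2 ^ n - 1) < 3 * n.
Proof.
move=> hn; have [s hs /andP[_ hsize]] := mersenne_chain hn.
apply: leq_ltn_trans hsize; rewrite leq_mul2l /=; apply: iota_ac_min hs.
by rewrite subn_gt0 -[X in X < _](expn0 2) ltn_exp2l // ltnW.
Qed.

Local Open Scope R_scope.

Lemma INR_expn m k : INR (expn m k) = INR m ^ k.
Proof. by elim: k => [|k IH] //; rewrite expnS mulnE mult_INR IH. Qed.

Lemma Int_part_le_1 r : r < 2 -> IZR (Int_part r) <= 1.
Proof.
move=> hr; have [hle _] := base_Int_part r.
have hlt : (Int_part r < 2)%Z by apply: lt_IZR; lra.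
by apply: IZR_le; lia.
Qed.

Lemma Rpower_log2 x : 0 < x -> Rpower 2 (ln x / ln 2) = x.
Proof. by move=> hx; apply: Rpower_Rlog; lra. Qed.

Lemma log2_le x m : 0 < x -> x <= 2 ^ m -> ln x / ln 2 <= INR m.
Proof.
move=> hx hm; apply: Rnot_lt_le => hlt.
have := Rpower_lt 2 _ _ ltac:(lra) hlt.
by rewrite Rpower_log2 // Rpower_pow; lra.
Qed.

Lemma Int_part_log2_le x m :
  0 < x -> x <= 2 ^ m -> IZR (Int_part (ln x / ln 2 - 1)) <= INR m - 1.
Proof.
move=> hx hm; have [hK _] := base_Int_part (ln x / ln 2 - 1).
have := log2_le hx hm; lra.
Qed.

Lemma lt_twice_pow2_floor_log2 x :
  0 < x -> x < 2 * powerRZ 2 (Int_part (ln x / ln 2 - 1) + 1).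
Proof.
move=> hx; have [_ hK] := base_Int_part (ln x / ln 2 - 1).
rewrite powerRZ_Rpower; last lra.
set K := Int_part _ in hK *.
have -> : 2 * Rpower 2 (IZR (K + 1)) = Rpower 2 (1 + IZR (K + 1)).
  by rewrite Rpower_plus Rpower_1 //; lra.
rewrite -{1}(Rpower_log2 hx); apply: Rpower_lt; first lra.
by rewrite plus_IZR; lra.
Qed.

Lemma Int_part_div_floor_log2_le x : 0 < x ->
  IZR (Int_part ((x - 2) / powerRZ 2 (Int_part (ln x / ln 2 - 1) + 1))) <= 1.
Proof.
move=> hx; apply: Int_part_le_1.
have hP := lt_twice_pow2_floor_log2 hx.
set P := powerRZ _ _ in hP *.
have hP0 : 0 < P by apply: powerRZ_lt; lra.
by apply: (Rmult_lt_reg_r P) => //; rewrite /Rdiv Rmult_assoc Rinv_l; lra.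
Qed.

Theorem mainTheorem13 (n : nat) (hn : leq 2 n) :
  INR (iota_ac (subn (expn 2 n) 1))
  <= 3 / 2 * INR n
     - IZR (Int_part (INR (subn n 2) /
              powerRZ 2 (Int_part (ln (INR n) / ln 2 - 1) + 1)%Z))
     - IZR (Int_part (ln (INR n) / ln 2 - 1))
     + 1 / 4 * (1 - (-1) ^ n)
     + INR (iota_ac n).
Proof.
have hn0 : 0 < INR n by apply: (lt_INR 0); apply/ltP; exact: ltnW.
have hpow : INR n <= 2 ^ iota_ac n.
  have -> : 2 = INR 2 by rewrite /=; lra.
  by rewrite -INR_expn; apply/le_INR/leP/iota_ac_ge/ltnW.
have hchain : 2 * INR (iota_ac (expn 2 n - 1)) < 3 * INR n.
  have := lt_INR _ _ (ltP (iota_ac_mersenne_lt hn)).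
  by rewrite !mulnE !mult_INR /=; lra.
have hsign : (-1) ^ n <= 1 by rewrite -(pow_1_abs n); apply: Rle_abs.
have -> : INR (subn n 2) = INR n - 2.
  by rewrite -minusE minus_INR /=; [lra | exact/leP].
have := Int_part_log2_le hn0 hpow.
have := Int_part_div_floor_log2_le hn0.
lra.
Qed.
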